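(* Let $q=2^h$ and let $$U=\left\{\left(x,\,y,\,x^q+y^{q^2},\,x^{q^2}+y^q+y^{q^2}\right): x,y\in\mathbb F_{q^4}\right\}\subseteq\mathbb F_{q^4}^4.$$ Then $U$ is maximum scattered if and only if $h\not\equiv 2\pmod 4$.
   Context: $U$ is an $\mathbb F_q$-subspace of $\mathbb F_{q^4}^4$. An $\mathbb F_q$-subspace $U$ of $\mathbb F_{q^m}^k$ is scattered if $\dim_{\mathbb F_q}(U\cap\langle w\rangle_{\mathbb F_{q^m}})\le 1$ for every nonzero $w\in\mathbb F_{q^m}^k$; a scattered subspace has $\mathbb F_q$-dimension at most $km/2$, and it is called maximum scattered if its $\mathbb F_q$-dimension equals $km/2$ (here $km/2=8$). *)

From HB Require Import structures.
From mathcomp Require Import all_boot all_order all_algebra.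
Unset Strict Implicit. Unset Printing Implicit Defensive.
Import GRing.Theory.
Local Open Scope ring_scope.

Section Scattered.
Variable F : finFieldType.
(* q is the order of the subfield F_q of F, described as {a | a^q = a}. *)
Variable q : nat.
Variable k : nat.

Definition Fq : pred F := fun a => a ^+ q == a.

Definition Fq_lin_indep (d : nat) (v : 'I_d -> 'rV[F]_k) : Prop :=
  forall c : 'I_d -> F, (forall i, c i \in Fq) ->
    \sum_(i < d) c i *: v i = 0 -> forall i, c i = 0.

Definition Fq_dim (S : pred 'rV[F]_k) (d : nat) : Prop :=
  exists v : 'I_d -> 'rV[F]_k,
    [/\ forall i, v i \in S, @Fq_lin_indep d v &
        forall u, u \in S -> exists2 c : 'I_d -> F,
           (forall i, c i \in Fq) & u = \sum_(i < d) c i *: v i].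

Definition Fspan (w : 'rV[F]_k) : pred 'rV[F]_k :=
  fun u => [exists l : F, u == l *: w].

Definition scattered (U : pred 'rV[F]_k) : Prop :=
  forall w : 'rV[F]_k, w != 0 ->
    exists2 d, (d <= 1)%N & Fq_dim [predI U & Fspan w] d.

(* maximum scattered: scattered with F_q-dimension k*m/2, where #|F| = q^m *)
Definition max_scattered (m : nat) (U : pred 'rV[F]_k) : Prop :=
  scattered U /\ Fq_dim U ((k * m) %/ 2).
End Scattered.

Definition U_h (h : nat) (F : finFieldType) : pred 'rV[F]_4 :=
  let q := (2 ^ h)%N in
  fun u => [exists x : F, exists y : F,
    u == \row_(i < 4) [:: x; y; x ^+ q + y ^+ (q ^ 2);
                          x ^+ (q ^ 2) + y ^+ q + y ^+ (q ^ 2)]`_i].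

(* Write u(x, y) = (x, y, x^q + y^(q^2), x^(q^2) + y^q + y^(q^2)), so that U is
   the image of u, and let s be the Frobenius x |-> x^q of F = F_(q^4).
   U is scattered iff mu u(x, y) in U with (x, y) <> 0 forces mu in F_q.
   If mu is not in F_q, eliminating x from the two membership conditions and
   their conjugates leaves a 4x4 linear system in y, s y, s^2 y, s^3 y whose
   determinant, in characteristic 2, is P^4 + P n^3 + n^4 with P, n products
   of differences of conjugates of mu satisfying s P = P + n and s n = n.  If
   it vanished, T = P / n would be a root of X^4 + X + 1 with T^q = T + 1,
   which forces h = 2 (mod 4).  Conversely, if h = 2 (mod 4) then q = -1
   (mod 5): for a primitive fifth root of unity rho and u <> 0 with
   s u = rho u, the trace of u vanishes, so u = l + s l by the additive
   Hilbert 90, and l, which is not in F_q, maps u(rho, 1 + rho^2) into U.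
   Finally F has an F_q-basis of size 4, since the fixed field of s has q
   elements (count the kernel and the image of x |-> x + s x), and it
   yields an F_q-basis of U of size 8. *)

From HB Require Import structures.
From mathcomp Require Import all_boot all_order all_algebra finfield cyclic.
From mathcomp Require Import ring zify.
Set Implicit Arguments. Unset Strict Implicit. Unset Printing Implicit Defensive.
Import GRing.Theory.
Local Open Scope ring_scope.

Lemma card_ker_mul_card_im (V W : finZmodType) (f : {additive V -> W}) :
  #|V| = (#|[set x | f x == 0%R]| * #|[set f x | x in V]|)%N.
Proof.
rewrite -[LHS]sum1_card (partition_big f (mem [set f x | x in V])) => [|x _];
  last exact: imset_f.
rewrite mulnC -sum_nat_const; apply: eq_bigr => _ /imsetP[x0 _ ->].
rewrite sum1dep_card -[RHS](card_imset _ (addrI x0)); apply: eq_card => x.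
rewrite inE; apply/eqP/imsetP => [fx | [y]]; last first.
  by rewrite inE => /eqP fy ->; rewrite raddfD fy addr0.
by exists (x - x0); rewrite ?inE ?raddfB ?fx ?subrr // addrC subrK.
Qed.

Lemma card_roots_lt_size (R : finIdomainType) (p : {poly R}) :
  p != 0 -> (#|[set x | root p x]| < size p)%N.
Proof.
move=> p0; rewrite cardE; apply: max_poly_roots => //; last exact: enum_uniq.
by apply/allP => x; rewrite mem_enum inE.
Qed.

Lemma size_polyXnD (R : nzRingType) (n : nat) (p : {poly R}) :
  (size p <= n)%N -> size ('X^n + p) = n.+1.
Proof. by move=> pn; rewrite size_polyDl size_polyXn. Qed.

Lemma exists_pow_prim_root (F : finFieldType) (n d : nat) :
  (n * d %| #|F|.-1)%N -> exists2 u : F, u != 0 & d.-primitive_root (u ^+ n).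
Proof.
set N := #|F|.-1 => ndN; have F_gt1 := card_finNzRing_gt1 F.
have N_gt0 : (0 < N)%N by rewrite -ltnS prednK // ltnW.
have [g _ g_prim] : exists2 g, g \in enum [pred x : F | x != 0] & N.-primitive_root g.
  apply/hasP/has_prim_root; rewrite ?enum_uniq -?cardE ?cardC1 //.
  apply/allP => x; rewrite mem_enum /= => x0; rewrite unity_rootE; apply/eqP.
  by apply: (mulIf x0); rewrite mul1r -exprSr /N prednK ?expf_card // ltnW.
have [t N_t] := dvdnP ndN.
have d_gt0 : (0 < d)%N by move: N_gt0; rewrite N_t !muln_gt0 => /and3P[].
exists (g ^+ t); first by rewrite expf_neq0 // (prim_root_eq0 g_prim) -lt0n.
rewrite -exprM (_ : (t * n)%N = (N %/ d)%N); last by rewrite N_t mulnA mulnK.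
by apply: dvdn_prim_root => //; rewrite N_t !dvdn_mull.
Qed.

Lemma pchar2_sqrrD (R : comNzRingType) (x y : R) :
  2 \in [pchar R] -> (x + y) ^+ 2 = x ^+ 2 + y ^+ 2.
Proof. by move=> R2; rewrite sqrrD mulr2n (addrr_pchar2 R2) addr0. Qed.

Lemma pchar2_x4x1_exp2n_eq_add1 (R : comNzRingType) (T : R) (k : nat) :
  2 \in [pchar R] -> T ^+ 4 = T + 1 -> T ^+ (2 ^ k) = T + 1 -> (k %% 4 = 2)%N.
Proof.
move=> R2 T4 Tk; have sqrD := pchar2_sqrrD _ _ R2.
have T1_neqT : T + 1 != T by rewrite -subr_eq0 addrC addKr oner_eq0.
have T4_neqT : T ^+ 4 != T by rewrite T4.
have T16 : T ^+ 16 = T.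
  rewrite (exprM T 4 4) T4 -[4%N]/(2 * 2)%N !exprM !sqrD -exprM T4 !expr1n.
  by rewrite -addrA (addrr_pchar2 R2) addr0.
have T_exp2n i r : T ^+ (2 ^ (4 * i + r)) = T ^+ (2 ^ r).
  elim: i => [|i IHi]; first by rewrite muln0.
  by rewrite mulnS -addnA expnD exprM T16 IHi.
move: Tk; rewrite {1}(divn_eq k 4) mulnC T_exp2n.
have : (k %% 4 < 4)%N by rewrite ltn_mod.
case: (k %% 4)%N => [|[|[|[|//]]]] // _ /= Tr.
- by move: T1_neqT; rewrite -Tr expr1 eqxx.
- move: T4_neqT; rewrite -[4%N]/(2 * 2)%N exprM Tr sqrD expr1n Tr.
  by rewrite -addrA (addrr_pchar2 R2) addr0 eqxx.
- have T2 : T ^+ 2 = T.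
    by apply: (addIr 1); rewrite -Tr -[(2 ^ 3)%N]/(4 * 2)%N exprM T4 sqrD expr1n.
  by move: T4_neqT; rewrite -[4%N]/(2 * 2)%N exprM !T2 eqxx.
Qed.

(* Cramer's rule for the first unknown of a 4x4 system with zero diagonal:
   the factor of y0 is the determinant, expanded along the first column. *)
Lemma zero_diag4_cramer (R : comRingType)
    (a0 a1 a2 a3 b0 b1 b2 b3 c0 c1 c2 c3 y0 y1 y2 y3 : R) :
  a0 * y1 + b0 * y2 + c0 * y3 = 0 -> a1 * y2 + b1 * y3 + c1 * y0 = 0 ->
  a2 * y3 + b2 * y0 + c2 * y1 = 0 -> a3 * y0 + b3 * y1 + c3 * y2 = 0 ->
  (c1 * (a0 * a2 * c3 - a2 * b0 * b3 - c0 * c2 * c3)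
   + b2 * (b0 * b1 * b3 - a0 * b1 * c3 - a1 * b3 * c0)
   + a3 * (a1 * c0 * c2 - a0 * a1 * a2 - b0 * b1 * c2)) * y0 = 0.
Proof.
move=> E0 E1 E2 E3.
rewrite -[RHS](_ : (a1 * a2 * b3 + b1 * c2 * c3) * 0
  + (a0 * a2 * c3 - a2 * b0 * b3 - c0 * c2 * c3) * 0
  + (b0 * b1 * b3 - a0 * b1 * c3 - a1 * b3 * c0) * 0
  + (a1 * c0 * c2 - a0 * a1 * a2 - b0 * b1 * c2) * 0 = 0); last by ring.
rewrite -[X in _ = _ + _ * X]E3 -[X in _ = _ + _ * X + _]E2.
rewrite -[X in _ = _ + _ * X + _ + _]E1 -[X in _ = _ * X + _ + _ + _]E0.
ring.
Qed.

(* With l_i = mu^(q^i), x_i = x^(q^i) and y_i = y^(q^i), this is what remains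
   of the conditions for mu u(x, y) in U once x_2 is eliminated (yrel_eq0). *)
Definition yrel (R : ringType) (l0 l1 l2 l3 y1 y2 y3 : R) :=
  (l2 - l1) * (l1 - l0) * y1 + (l2 - l1) * (l2 - l0) * y2
  + (l0 - l2) * (l3 - l1) * y3.

(* Minus the determinant of yrel and its three cyclic shifts, as a form in
   P = (l0 - l1)(l2 - l3) and n = (l0 - l2)(l1 - l3) (see yrel_cramer). *)
Definition yrel_det (R : ringType) (P n : R) :=
  P ^+ 4 - 2%:R * P ^+ 3 * n - 6%:R * P ^+ 2 * n ^+ 2 + 7%:R * P * n ^+ 3 + n ^+ 4.

Lemma yrel_eq0 (R : comRingType) (l0 l1 l2 l3 x2 y1 y2 y3 : R) :
  (l2 - l0) * x2 + (l1 - l0) * y1 + (l2 - l0) * y2 = 0 ->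
  (l2 - l1) * x2 + (l3 - l1) * y3 = 0 -> yrel l0 l1 l2 l3 y1 y2 y3 = 0.
Proof.
move=> B A; have -> : yrel l0 l1 l2 l3 y1 y2 y3 =
    (l2 - l1) * ((l2 - l0) * x2 + (l1 - l0) * y1 + (l2 - l0) * y2)
    - (l2 - l0) * ((l2 - l1) * x2 + (l3 - l1) * y3) by rewrite /yrel; ring.
by rewrite B A !mulr0 subrr.
Qed.

Lemma yrel_cramer (R : comRingType) (l0 l1 l2 l3 y0 y1 y2 y3 : R) :
  yrel l0 l1 l2 l3 y1 y2 y3 = 0 -> yrel l1 l2 l3 l0 y2 y3 y0 = 0 ->
  yrel l2 l3 l0 l1 y3 y0 y1 = 0 -> yrel l3 l0 l1 l2 y0 y1 y2 = 0 ->
  yrel_det ((l0 - l1) * (l2 - l3)) ((l0 - l2) * (l1 - l3)) * y0 = 0.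
Proof.
move=> E0 E1 E2 E3; have := zero_diag4_cramer E0 E1 E2 E3.
set D := (X in X * y0 = 0 -> _).
have -> : D = - yrel_det ((l0 - l1) * (l2 - l3)) ((l0 - l2) * (l1 - l3)).
  by rewrite /D /yrel_det; ring.
by rewrite mulNr => /eqP; rewrite oppr_eq0 => /eqP.
Qed.

Definition row4 (R : nzRingType) (a b c d : R) : 'rV[R]_4 :=
  \row_(i < 4) [:: a; b; c; d]`_i.

Lemma row4_inj (R : nzRingType) (a b c d a' b' c' d' : R) :
  row4 a b c d = row4 a' b' c' d' -> [/\ a = a', b = b', c = c' & d = d'].
Proof.
move=> eq_row; have coord (i : 'I_4) := congr1 (fun v : 'rV_4 => v 0 i) eq_row.
by have := coord 0; have := coord 1; have := coord 2%:R; have := coord 3%:R; rewrite !mxE.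
Qed.

Lemma row4D (R : nzRingType) (a b c d a' b' c' d' : R) :
  row4 a b c d + row4 a' b' c' d' = row4 (a + a') (b + b') (c + c') (d + d').
Proof. by apply/rowP => -[[|[|[|[|i]]]] ?]; rewrite !mxE. Qed.

Lemma row4Z (R : nzRingType) (mu a b c d : R) :
  mu *: row4 a b c d = row4 (mu * a) (mu * b) (mu * c) (mu * d).
Proof. by apply/rowP => -[[|[|[|[|i]]]] ?]; rewrite !mxE. Qed.

Lemma row4_0 (R : nzRingType) : row4 0 0 0 0 = 0 :> 'rV[R]_4.
Proof. by apply/rowP => -[[|[|[|[|i]]]] ?]; rewrite !mxE. Qed.

Lemma mem_Fq (F : finFieldType) (q : nat) (a : F) : (a \in Fq F q) = (a ^+ q == a).
Proof. by []. Qed.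

Lemma Fq_div (F : finFieldType) (q : nat) (a b : F) :
  a \in Fq F q -> b \in Fq F q -> a / b \in Fq F q.
Proof. by rewrite !mem_Fq => /eqP aq /eqP bq; rewrite exprMn exprVn aq bq. Qed.

Lemma Fspan_scale (F : finFieldType) (k : nat) (w : 'rV[F]_k) (l : F) :
  l *: w \in Fspan F k w.
Proof. by apply/existsP; exists l. Qed.

Lemma Fspan_self (F : finFieldType) (k : nat) (w : 'rV[F]_k) : w \in Fspan F k w.
Proof. by rewrite -{1}[w]scale1r Fspan_scale. Qed.

Lemma scatteredP (F : finFieldType) (q k : nat) (U : pred 'rV[F]_k) :
  scattered F q k U <->
  forall (v : 'rV[F]_k) (mu : F), v \in U -> v != 0 -> mu *: v \in U -> mu \in Fq F q.
Proof.
split=> [scatU v mu vU v0 muvU | FqU w w0].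
  have vS : v \in [predI U & Fspan F k v] by rewrite inE /= vU Fspan_self.
  have muvS : mu *: v \in [predI U & Fspan F k v] by rewrite inE /= muvU Fspan_scale.
  have [[|[|//]] _ [e [_ _ e_span]]] := scatU v v0.
    by have [c _ v_e] := e_span v vS; rewrite v_e big_ord0 eqxx in v0.
  have [c0 c0Fq] := e_span v vS; have [c1 c1Fq] := e_span _ muvS.
  rewrite !big_ord1 => mu_e v_e; move: mu_e; rewrite v_e scalerA => /eqP.
  rewrite -subr_eq0 -scalerBl scaler_eq0 subr_eq0 => /orP[/eqP mu_c | e0]; last first.
    by rewrite v_e (eqP e0) scaler0 eqxx in v0.
  have c0_neq0 : c0 0 != 0 by apply: contraNneq v0 => c0_0; rewrite v_e c0_0 scale0r.
  by rewrite -(mulfK c0_neq0 mu) mu_c Fq_div.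
case: (pickP [pred v | (v \in [predI U & Fspan F k w]) && (v != 0)]) => [v | noS].
  rewrite /= !inE => /andP[/andP[vU /existsP[lv /eqP v_w]] v0].
  exists 1%N => //; exists (fun=> v); split.
  - by move=> _; rewrite inE /= vU v_w Fspan_scale.
  - move=> c _; rewrite big_ord1 => /eqP; rewrite scaler_eq0 (negbTE v0) orbF.
    by move=> /eqP c0 i; rewrite (ord1 i).
  move=> u; rewrite inE => /andP[uU /existsP[lu /eqP u_w]].
  have lv0 : lv != 0 by apply: contraNneq v0 => lv0; rewrite v_w lv0 scale0r.
  have u_v : u = (lu / lv) *: v by rewrite v_w scalerA divfK.
  by exists (fun=> lu / lv); rewrite ?big_ord1 // => _; apply: FqU v0 _; rewrite -?u_v.
exists 0%N => //; exists (fun=> 0); split; [by case | by move=> ? ? ? [] |].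
move=> u uS; exists (fun=> 0); first by case.
by rewrite big_ord0; apply/eqP; have := noS u; rewrite /= uS => /negbFE.
Qed.

Section BasisOverSubfield.
Variables (F : finFieldType) (K : divringClosed F).

Definition free_over (k : nat) (e : 'I_k -> F) : Prop :=
  forall c : 'I_k -> F, (forall i, c i \in K) -> \sum_(i < k) c i * e i = 0 ->
  forall i, c i = 0.

Definition span_over (k : nat) (e : 'I_k -> F) : {set F} :=
  [set \sum_(i < k) c i * e i | c : {ffun 'I_k -> F} in ffun_on K].

Lemma card_span_over k (e : 'I_k -> F) : free_over e -> #|span_over e| = (#|K| ^ k)%N.
Proof.
move=> e_free; rewrite card_in_imset ?card_ffun_on ?card_ord //.
move=> c c' /ffun_onP cK /ffun_onP c'K /eqP; rewrite -subr_eq0 -sumrB => /eqP csum.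
apply/ffunP => i; apply/eqP; rewrite -subr_eq0; apply/eqP.
apply: (e_free (fun i => c i - c' i)) => [j | ]; first by rewrite rpredB ?cK ?c'K.
by under eq_bigr do rewrite mulrBl.
Qed.

Definition snoc_fam (k : nat) (e : 'I_k -> F) (z : F) (i : 'I_k.+1) : F :=
  if unlift ord_max i is Some j then e j else z.

Lemma sum_snoc_fam k (e : 'I_k -> F) z (c : 'I_k.+1 -> F) :
  \sum_(i < k.+1) c i * snoc_fam e z i
  = \sum_(j < k) c (lift ord_max j) * e j + c ord_max * z.
Proof.
rewrite big_ord_recr /snoc_fam unlift_none; congr (_ + _); apply: eq_bigr => j _.
have -> : widen_ord (leqnSn k) j = lift ord_max j.
  by apply: val_inj; rewrite [RHS]lift_max.
by rewrite liftK.
Qed.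

Lemma free_over_snoc k (e : 'I_k -> F) z :
  free_over e -> z \notin span_over e -> free_over (snoc_fam e z).
Proof.
move=> e_free z_span c cK; rewrite sum_snoc_fam => csum.
have c_max : c ord_max = 0.
  apply: contraNeq z_span => c0; apply/imsetP.
  exists [ffun j => - c (lift ord_max j) / c ord_max].
    by apply/ffun_onP => j; rewrite ffunE rpred_div ?rpredN.
  apply: (mulfI c0); rewrite mulr_sumr.
  under eq_bigr do rewrite ffunE mulrA mulrCA divff // mulr1 mulNr.
  by apply/eqP; rewrite sumrN -addr_eq0 addrC csum.
rewrite c_max mul0r addr0 in csum.
have c_lift := e_free _ (fun j => cK _) csum.
by move=> i; case: (unliftP ord_max i) => [j ->|->].
Qed.

Lemma exists_basis_over m : #|F| = (#|K| ^ m)%N ->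
  exists e : 'I_m -> F, free_over e /\
    forall z, exists2 c : 'I_m -> F, (forall i, c i \in K) & z = \sum_(i < m) c i * e i.
Proof.
move=> cardF.
have K_gt1 : (1 < #|K|)%N.
  by apply/card_gt1P; exists 0, 1; rewrite rpred0 rpred1 eq_sym oner_eq0.
have [e e_free] : exists e : 'I_m -> F, free_over e.
  suff: forall k, (k <= m)%N -> exists e : 'I_k -> F, free_over e by apply.
  elim=> [|k IHk] km; first by exists (fun=> 0) => c _ _ [].
  have [e e_free] := IHk (ltnW km).
  have /subsetPn[z _ z_span] : ~~ ([set: F] \subset span_over e).
    apply/negP => /subset_leq_card.
    by rewrite cardsT cardF card_span_over // leq_exp2l // leqNgt km.
  by exists (snoc_fam e z); apply: free_over_snoc.
exists e; split=> // z.
have : z \in span_over e.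
  suff -> : span_over e = setT by rewrite inE.
  by apply/eqP; rewrite eqEcard subsetT cardsT cardF (card_span_over e_free) leqnn.
by case/imsetP => c /ffun_onP cK ->; exists c.
Qed.

End BasisOverSubfield.

Section FrobeniusOfFq4.
Variables (F : finFieldType) (h : nat).
Hypothesis cardF : #|F| = ((2 ^ h) ^ 4)%N.
Local Notation q := (2 ^ h)%N.

Lemma pchar2F : 2 \in [pchar F].
Proof. by apply: (@card_finPcharP _ 2 (h * 4)); rewrite // cardF expnM. Qed.

Lemma q_gt1 : (1 < q)%N.
Proof. by have := card_finNzRing_gt1 F; rewrite cardF -{1}(exp1n 4) ltn_exp2r. Qed.

Lemma q_mod5 : (h %% 4 = 2)%N -> (q %% 5 = 4)%N.
Proof.
move=> h4; rewrite (divn_eq h 4) h4 [(_ * 4)%N]mulnC expnD expnM.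
by rewrite -modnMml -modnXm /= exp1n.
Qed.

Definition frob (x : F) : F := x ^+ q.

Lemma frob_is_nmod_morphism : nmod_morphism frob.
Proof.
split=> [|x y]; first by rewrite /frob expr0n expn_eq0.
by apply: exprDn_pchar; rewrite (eq_pnat _ (pcharf_eq pchar2F)) pnatX pnat_id.
Qed.

Lemma frob_is_monoid_morphism : monoid_morphism frob.
Proof. by split=> [|x y]; [exact: expr1n | exact: exprMn]. Qed.

HB.instance Definition _ := GRing.isNmodMorphism.Build F F frob frob_is_nmod_morphism.
HB.instance Definition _ :=
  GRing.isMonoidMorphism.Build F F frob frob_is_monoid_morphism.

Lemma frobK4 x : frob (frob (frob (frob x))) = x.
Proof.
by rewrite /frob -!exprM -[RHS](expf_card x) cardF !expnS expn0 muln1 !mulnA.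
Qed.

Lemma frob_iterE x : [/\ frob (frob (frob x)) = x ^+ (q ^ 3),
  frob (frob x) = x ^+ (q ^ 2) & frob x = x ^+ q].
Proof. by rewrite /frob -!exprM !expnS expn0 muln1 mulnA. Qed.

Lemma mem_Fq_frob c : (c \in Fq F q) = (frob c == c).
Proof. by []. Qed.

Lemma Fq_divring_closed : GRing.divring_closed (Fq F q).
Proof.
split=> [|a b|]; last exact: Fq_div.
  by rewrite mem_Fq_frob rmorph1.
by rewrite !mem_Fq_frob => /eqP fa /eqP fb; rewrite rmorphB /= fa fb.
Qed.

HB.instance Definition _ := GRing.isDivringClosed.Build F (Fq F q) Fq_divring_closed.

Definition trace (x : F) : F := x + frob x + frob (frob x) + frob (frob (frob x)).

Lemma trace_add_frob x : trace (x + frob x) = 0.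
Proof.
by rewrite -[RHS](addrr_pchar2 pchar2F (trace x)) /trace !rmorphD /= frobK4; ring.
Qed.

Lemma card_Fq_image_add_frob :
  #|Fq F q| = q /\ [set x + frob x | x in F] = [set x | trace x == 0].
Proof.
have q1 := q_gt1.
have Fq_le : (#|Fq F q| <= q)%N.
  have sizeP : size ('X^q - 'X : {poly F}) = q.+1.
    by rewrite size_polyXnD // size_polyN size_polyX.
  rewrite -ltnS -sizeP; apply: leq_ltn_trans (card_roots_lt_size _); last first.
    by rewrite -size_poly_eq0 sizeP.
  apply/subset_leq_card/subsetP => x.
  by rewrite mem_Fq_frob inE rootE !hornerE subr_eq0.
have ker_trace_le : (#|[set x | trace x == 0%R]| <= q ^ 3)%N.
  have sizeP : size ('X^(q ^ 3) + ('X^(q ^ 2) + ('X^q + 'X)) : {poly F}) = (q ^ 3).+1.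
    by rewrite !size_polyXnD ?size_polyX //; rewrite !expnS expn0 muln1; nia.
  rewrite -ltnS -sizeP; apply: leq_ltn_trans (card_roots_lt_size _); last first.
    by rewrite -size_poly_eq0 sizeP.
  apply/subset_leq_card/subsetP => x.
  rewrite !inE rootE !hornerD !hornerXn hornerX /trace; have [-> -> ->] := frob_iterE x.
  by move=> /eqP tr0; apply/eqP; rewrite -[RHS]tr0; ring.
have im_sub : [set x + frob x | x in F] \subset [set x | trace x == 0].
  by apply/subsetP => _ /imsetP[x _ ->]; rewrite inE trace_add_frob.
have im_le := leq_trans (subset_leq_card im_sub) ker_trace_le.
have := card_ker_mul_card_im (idfun \+ frob).
rewrite cardF (eq_card (B := Fq F q)) => [card_eq | x]; last first.
  by rewrite inE /= addr_eq0 (oppr_pchar2 pchar2F) eq_sym.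
have [-> im_eq] : #|Fq F q| = q /\ #|[set x + frob x | x in F]| = (q ^ 3)%N.
  move: card_eq Fq_le im_le; rewrite !expnS expn0 !muln1.
  by set a := #|Fq F q|; set b := #|_|; nia.
by split=> //; apply/eqP; rewrite eqEcard im_sub im_eq.
Qed.

Lemma card_Fq : #|Fq F q| = q.
Proof. by case: card_Fq_image_add_frob. Qed.

Lemma additive_hilbert90 u : trace u = 0 -> exists l, l + frob l = u.
Proof.
case: card_Fq_image_add_frob => _ im_eq tr0.
have : u \in [set x | trace x == 0] by rewrite inE tr0.
by rewrite -im_eq => /imsetP[l _ ->]; exists l.
Qed.

Definition uvec (x y : F) : 'rV[F]_4 :=
  row4 x y (frob x + frob (frob y)) (frob (frob x) + frob y + frob (frob y)).

Lemma memUP u : reflect (exists x y, u = uvec x y) (u \in U_h h F).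
Proof.
have frob2E z : z ^+ (q ^ 2) = frob (frob z) by case: (frob_iterE z).
apply: (iffP existsP) => [[x /existsP[y /eqP ->]] | [x [y ->]]].
  by exists x, y; rewrite !frob2E.
by exists x; apply/existsP; exists y; rewrite !frob2E.
Qed.

Lemma uvec_memU x y : uvec x y \in U_h h F.
Proof. by apply/memUP; exists x, y. Qed.

Lemma uvecD x y x' y' : uvec x y + uvec x' y' = uvec (x + x') (y + y').
Proof. by rewrite /uvec row4D !rmorphD /=; congr row4; ring. Qed.

Lemma uvecZ c x y : c \in Fq F q -> c *: uvec x y = uvec (c * x) (c * y).
Proof.
rewrite mem_Fq_frob => /eqP fc.
by rewrite /uvec row4Z !rmorphM /= !fc; congr row4; ring.
Qed.

Lemma uvec0 : uvec 0 0 = 0.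
Proof. by rewrite /uvec !rmorph0 !addr0 row4_0. Qed.

Lemma uvec_eq0 x y : uvec x y = 0 -> x = 0 /\ y = 0.
Proof. by rewrite -row4_0 => /row4_inj[]. Qed.

Lemma uvec_sum n (a b : 'I_n -> F) :
  \sum_(j < n) uvec (a j) (b j) = uvec (\sum_(j < n) a j) (\sum_(j < n) b j).
Proof.
elim: n a b => [|n IHn] a b; first by rewrite !big_ord0 uvec0.
by rewrite !big_ord_recr /= IHn uvecD.
Qed.

Lemma scale_uvec_memU mu x y :
  mu *: uvec x y \in U_h h F <-> uvec (mu * x) (mu * y) = mu *: uvec x y.
Proof.
split=> [/memUP[x' [y' ]] | <-]; last exact: uvec_memU.
by move=> e; rewrite e; move: e; rewrite /uvec row4Z => /row4_inj[-> -> _ _].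
Qed.

Lemma Fq_dim_U : Fq_dim F q 4 (U_h h F) 8.
Proof.
have cardF_Fq : #|F| = (#|Fq F q| ^ 4)%N by rewrite card_Fq.
have [e [e_free e_span]] := exists_basis_over cardF_Fq.
have splitl (j : 'I_4) : split (lshift 4 j) = inl j := unsplitK (inl j).
have splitr (j : 'I_4) : split (rshift 4 j) = inr j := unsplitK (inr j).
pose v (i : 'I_(4 + 4)) :=
  match split i with inl j => uvec (e j) 0 | inr j => uvec 0 (e j) end.
have sum_v (c : 'I_(4 + 4) -> F) : (forall i, c i \in Fq F q) ->
    \sum_(i < 4 + 4) c i *: v i
    = uvec (\sum_(j < 4) c (lshift 4 j) * e j) (\sum_(j < 4) c (rshift 4 j) * e j).
  move=> cFq; rewrite big_split_ord /= /v.
  under eq_bigr do rewrite splitl uvecZ // mulr0.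
  under [X in _ + X]eq_bigr do rewrite splitr uvecZ // mulr0.
  by rewrite !uvec_sum uvecD !big1_eq addr0 add0r.
exists v; split.
- by move=> i; rewrite /v; case: split => j; apply: uvec_memU.
- move=> c cFq; rewrite sum_v // => /uvec_eq0[].
  move=> /(e_free _ (fun j => cFq _)) cL /(e_free _ (fun j => cFq _)) cR i.
  by rewrite -(@splitK 4 4 i); case: split => j; [exact: cL | exact: cR].
move=> u /memUP[x [y ->]]; have [a aFq ->] := e_span x; have [b bFq ->] := e_span y.
pose c i := match split i with inl j => a j | inr j => b j end.
have cFq i : c i \in Fq F q by rewrite /c; case: split.
exists c => //; rewrite sum_v //.
by congr uvec; apply: eq_bigr => j _; rewrite /c ?splitl ?splitr.
Qed.

Lemma frob_yrel l0 l1 l2 l3 y1 y2 y3 :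
  frob (yrel l0 l1 l2 l3 y1 y2 y3)
  = yrel (frob l0) (frob l1) (frob l2) (frob l3) (frob y1) (frob y2) (frob y3).
Proof. by rewrite /yrel !rmorphD !rmorphM !rmorphB. Qed.

Lemma yrel_det_eq0_mod4 (P n : F) : frob P = P + n -> frob n = n -> n != 0 ->
  yrel_det P n = 0 -> (h %% 4 = 2)%N.
Proof.
move=> fP fn n0 D0.
have T4 : (P / n) ^+ 4 = P / n + 1.
  have : (P / n) ^+ 4 - P / n - 1
         + 2%:R * (- (P / n) ^+ 3 - 3%:R * (P / n) ^+ 2 + 4%:R * (P / n) + 1) = 0.
    by rewrite -(mulr0 (n ^- 4)) -D0 /yrel_det; field.
  rewrite (pcharf0 pchar2F) mul0r addr0 => /eqP.
  by rewrite -addrA -opprD subr_eq0 => /eqP.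
have fT : frob (P / n) = P / n + 1 by rewrite fmorph_div /= fP fn mulrDl divff.
exact: pchar2_x4x1_exp2n_eq_add1 pchar2F T4 fT.
Qed.

Lemma yrel_det_neq0 l0 l1 l2 l3 : (h %% 4 != 2)%N -> l0 != l1 ->
  frob l0 = l1 -> frob l1 = l2 -> frob l2 = l3 -> frob l3 = l0 ->
  yrel_det ((l0 - l1) * (l2 - l3)) ((l0 - l2) * (l1 - l3)) != 0.
Proof.
move=> h4 l01 f0 f1 f2 f3.
have l23 : l2 - l3 != 0 by rewrite -f2 -f1 -f0 -!rmorphB !fmorph_eq0 f0 subr_eq0.
have [n0 | n_neq0] := eqVneq ((l0 - l2) * (l1 - l3)) 0.
  rewrite n0 (_ : yrel_det _ 0 = ((l0 - l1) * (l2 - l3)) ^+ 4).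
    by rewrite expf_neq0 // mulf_neq0 // subr_eq0.
  by rewrite /yrel_det; ring.
apply: contra h4 => /eqP D0; apply/eqP; apply: yrel_det_eq0_mod4 n_neq0 D0.
  rewrite !rmorphM !rmorphB /= f0 f1 f2 f3.
  by rewrite -[X in _ = _ + X](oppr_pchar2 pchar2F); ring.
by rewrite !rmorphM !rmorphB /= f0 f1 f2 f3 -[RHS](oppr_pchar2 pchar2F); ring.
Qed.

Lemma scale_uvec_memU_eq0 mu x y : (h %% 4 != 2)%N -> mu \notin Fq F q ->
  mu *: uvec x y \in U_h h F -> x = 0 /\ y = 0.
Proof.
move=> h4 muFq /scale_uvec_memU; rewrite /uvec row4Z => /row4_inj[_ _].
rewrite !rmorphM /= => /eqP; rewrite -subr_eq0 => /eqP eqA.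
move=> /eqP; rewrite -subr_eq0 => /eqP eqB.
have A : (frob mu - mu) * frob x + (frob (frob mu) - mu) * frob (frob y) = 0.
  by rewrite -eqA; ring.
have B : (frob (frob mu) - mu) * frob (frob x) + (frob mu - mu) * frob y
         + (frob (frob mu) - mu) * frob (frob y) = 0.
  by rewrite -eqB; ring.
have fA := congr1 frob A; rewrite rmorph0 !rmorphD !rmorphM !rmorphB /= in fA.
have E0 := yrel_eq0 B fA.
have E1 := congr1 frob E0; rewrite frob_yrel !frobK4 rmorph0 in E1.
have E2 := congr1 frob E1; rewrite frob_yrel !frobK4 rmorph0 in E2.
have E3 := congr1 frob E2; rewrite frob_yrel !frobK4 rmorph0 in E3.
have mu_frob : mu != frob mu by rewrite eq_sym -mem_Fq_frob.
have /eqP := yrel_cramer E0 E1 E2 E3.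
rewrite mulf_eq0 (negbTE (yrel_det_neq0 h4 mu_frob _ _ _ (frobK4 mu))) //= => /eqP y0.
split=> //; apply/eqP; rewrite -(fmorph_eq0 frob).
move: A; rewrite y0 !rmorph0 mulr0 addr0 => /eqP.
by rewrite mulf_eq0 subr_eq0 -mem_Fq_frob (negbTE muFq).
Qed.

Lemma exists_frob_eigenvector : (h %% 4 = 2)%N ->
  exists u rho : F, [/\ u != 0, 5.-primitive_root rho & frob u = rho * u].
Proof.
move=> h4; have q1 := q_gt1.
have dvd_q : ((q - 1) * 5 %| #|F|.-1)%N.
  have -> : (#|F|.-1 = (q - 1) * ((q + 1) * (q * q + 1)))%N.
    by rewrite cardF !expnS expn0 muln1; nia.
  by rewrite dvdn_pmul2l ?subn_gt0 // dvdn_mulr // /dvdn -modnDml (q_mod5 h4).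
have [u u0 rho_prim] := exists_pow_prim_root dvd_q.
exists u, (u ^+ (q - 1)); split=> //.
by rewrite /frob -[in LHS](subnK (ltnW q1)) exprD expr1.
Qed.

Lemma frob_prim_root5 rho :
  (h %% 4 = 2)%N -> 5.-primitive_root rho -> frob rho = rho ^+ 4.
Proof. by move=> h4 rho_prim; rewrite /frob -(q_mod5 h4) (prim_expr_mod rho_prim). Qed.

Lemma scale_uvec_prim_root_memU u rho l : (h %% 4 = 2)%N ->
  5.-primitive_root rho -> frob u = rho * u -> frob l = l + u ->
  l *: uvec rho (1 + rho ^+ 2) \in U_h h F.
Proof.
move=> h4 rho_prim fu fl.
have rho5 := prim_expr_order rho_prim.
have phi : rho ^+ 4 + rho ^+ 3 + rho ^+ 2 + rho + 1 = 0.
  have : (rho - 1) * (rho ^+ 4 + rho ^+ 3 + rho ^+ 2 + rho + 1) = rho ^+ 5 - 1 by ring.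
  rewrite rho5 subrr => /eqP; rewrite mulf_eq0 subr_eq0 -[rho in rho == 1]expr1.
  by rewrite -(prim_order_dvd rho_prim) => /eqP.
have frho := frob_prim_root5 h4 rho_prim.
have frho2 : frob (rho ^+ 2) = rho ^+ 3.
  by rewrite rmorphXn /= frho -exprM -(prim_expr_mod rho_prim (4 * 2)).
have f2rho : frob (frob rho) = rho.
  by rewrite frho rmorphXn /= frho -exprM -(prim_expr_mod rho_prim (4 * 4)).
have f2rho2 : frob (frob (rho ^+ 2)) = rho ^+ 2.
  by rewrite frho2 rmorphXn /= frho -exprM -(prim_expr_mod rho_prim (4 * 3)).
have f2l : frob (frob l) = l + u + rho * u by rewrite fl rmorphD /= fl fu.
apply/scale_uvec_memU; rewrite /uvec row4Z; congr row4;
  rewrite !rmorphM !rmorphD !rmorph1 /= ?f2rho ?f2rho2 ?f2l ?frho ?frho2 ?fl.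
  by rewrite -[RHS]addr0 -(mulr0 u) -phi; ring.
rewrite -[RHS]addr0 -(addrr_pchar2 pchar2F (u * (1 + rho + rho ^+ 2 + rho ^+ 3))).
ring.
Qed.

Lemma non_scattered_witness : (h %% 4 = 2)%N ->
  exists (v : 'rV[F]_4) (l : F),
    [/\ v \in U_h h F, v != 0, l *: v \in U_h h F & l \notin Fq F q].
Proof.
move=> h4; have [u [rho [u0 rho_prim fu]]] := exists_frob_eigenvector h4.
have frho := frob_prim_root5 h4 rho_prim.
have f2u : frob (frob u) = u.
  by rewrite fu rmorphM /= frho fu mulrA -exprSr (prim_expr_order rho_prim) mul1r.
have [l fl] : exists l, l + frob l = u.
  apply: additive_hilbert90.
  by rewrite /trace !f2u -[RHS](addrr_pchar2 pchar2F (u + frob u)); ring.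
have fl' : frob l = l + u by rewrite -fl addrA (addrr_pchar2 pchar2F) add0r.
exists (uvec rho (1 + rho ^+ 2)), l; split.
- exact: uvec_memU.
- have rho0 : rho != 0 by rewrite (prim_root_eq0 rho_prim).
  by apply: contra rho0 => /eqP /uvec_eq0[-> _].
- exact: scale_uvec_prim_root_memU h4 rho_prim fu fl'.
by rewrite mem_Fq_frob fl' -subr_eq0 addrAC subrr add0r.
Qed.

End FrobeniusOfFq4.

Theorem theorem4p1 (h : nat) (F : finFieldType) :
  (0 < h)%N -> #|F| = ((2 ^ h) ^ 4)%N ->
  (@max_scattered F (2 ^ h) 4 4 (U_h h F) <-> (h %% 4 != 2)%N).
Proof.
(* 0 < h is implied by #|F| > 1. *)
move=> _ cardF; split=> [[/scatteredP U_scat _] | h4].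
  apply/negP => /eqP h4.
  have [v [l [vU v0 lvU lFq]]] := non_scattered_witness cardF h4.
  by rewrite (U_scat v l vU v0 lvU) in lFq.
split; last exact: Fq_dim_U.
apply/scatteredP => _ mu /memUP[x [y ->]] v0 muvU; apply: contraT => muFq.
have [x0 y0] := scale_uvec_memU_eq0 cardF h4 muFq muvU.
by rewrite x0 y0 (uvec0 cardF) eqxx in v0.
Qed.
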